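(* For all integers $m,n\ge 0$ and all real $t$, $$H_{m,n}(t)=m!\,n!\left(\frac{1}{\sqrt2}\right)^{m+n}\sum_{k=0}^{m}\sum_{j=0}^{n}\frac{H_{k,j}(t/\sqrt2)}{k!\,j!}\,\frac{H_{m-k,n-j}(t/\sqrt2)}{(m-k)!\,(n-j)!}.$$
   Context: For integers $m,n\ge 0$, the two-index Hermite polynomial is $H_{m,n}(x)=\left(-\frac{d}{dx}+2x\right)^m(x^n)$, i.e. the operator $f\mapsto -f'+2xf$ applied $m$ times to $x^n$. *)

From HB Require Import structures.
From mathcomp Require Import all_boot all_order all_algebra.
Set Implicit Arguments. Unset Strict Implicit. Unset Printing Implicit Defensive.
Import Order.TTheory GRing.Theory Num.Theory.
Local Open Scope ring_scope.

Definition hermite_op (R : comNzRingType) (p : {poly R}) : {poly R} :=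
  - p^`() + 2%:P * 'X * p.

Definition H2 (R : comNzRingType) (m n : nat) : {poly R} :=
  iter m (@hermite_op R) ('X^n).

From HB Require Import structures.
From mathcomp Require Import all_boot all_order all_algebra.
From mathcomp Require Import ring.
Import Order.TTheory GRing.Theory Num.Theory.
Local Open Scope ring_scope.
Set Implicit Arguments. Unset Strict Implicit. Unset Printing Implicit Defensive.

(* Write h_x(k, j) = H_{k,j}(x) / (k! j!).  Differentiating the defining
   recursion H_{m+1,n} = -H_{m,n}' + 2x H_{m,n} gives
   H_{m,n}' = n H_{m,n-1} + 2m H_{m-1,n}, hence the three-term recurrence
     (k+1) h(k+1, j) = 2x h(k, j) - h(k, j-1) - 2 h(k-1, j),
   whose solution is determined by its row h(0, j) = x^j / j!.
   The convolution C = h_x * h_x (over both indices) satisfies the same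
   recurrence multiplied by 2, with first row (2x)^j / j!; rescaling
   C(k, j) by s^(k+j) with 2 s^2 = 1 turns it into a solution of the plain
   recurrence at the point 2 s x.  Taking s = x / t = 1 / sqrt 2, both sides
   of the theorem (divided by m! n!) solve the same recurrence with the
   same first row, so they coincide. *)

Section HermiteOperator.
Variable R : comNzRingType.
Implicit Types p q : {poly R}.

Lemma hermite_opD p q : hermite_op (p + q) = hermite_op p + hermite_op q.
Proof. rewrite /hermite_op derivD; ring. Qed.

Lemma hermite_opMn p k : hermite_op (p *+ k) = hermite_op p *+ k.
Proof.
elim: k => [|k IH]; first by rewrite !mulr0n /hermite_op deriv0; ring.
by rewrite !mulrS hermite_opD IH.
Qed.

Lemma H2S m n : H2 R m.+1 n = hermite_op (H2 R m n).
Proof. by rewrite /H2 iterS. Qed.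

Lemma H20 n : H2 R 0 n = 'X^n.
Proof. by []. Qed.

(* Derivative of H_{m,n}: H_{m,n}' = n H_{m,n-1} + 2m H_{m-1,n}.  By
   induction on m, using [D, -D + 2x] = 2 to commute the derivative past
   the Hermite operator. *)
Lemma deriv_H2 m n :
  (H2 R m n)^`() = H2 R m n.-1 *+ n + H2 R m.-1 n *+ (2 * m)%N.
Proof.
elim: m n => [|m IH] n; first by rewrite /H2 /= derivXn muln0 mulr0n addr0.
rewrite H2S {1}/hermite_op derivD derivN derivM IH.
set P := H2 R m n.-1 *+ n + H2 R m.-1 n *+ (2 * m)%N.
have commute_D : - P^`() + ((2%:P * 'X)^`() * H2 R m n + 2%:P * 'X * P)
   = hermite_op P + 2%:P * H2 R m n.
  by rewrite /hermite_op derivM derivC derivX mul0r add0r mulr1; ring.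
rewrite commute_D /P hermite_opD !hermite_opMn -H2S /= polyC_natr mulr_natl.
case: m {IH P commute_D} => [|m]; first by rewrite muln0 !mulr0n addr0.
by rewrite /= (mulnS 2 m.+1) mulrnDr -addrA [X in _ + X = _]addrC.
Qed.
End HermiteOperator.

Section HermiteArrays.
Variable R : numFieldType.
Implicit Types f : nat -> nat -> R.

Lemma horner_H2S m n (x : R) : (H2 R m.+1 n).[x] =
  2 * x * (H2 R m n).[x] - (H2 R m n.-1).[x] *+ n - (H2 R m.-1 n).[x] *+ (2 * m)%N.
Proof.
by rewrite H2S /hermite_op deriv_H2 !hornerE /= !hornerMn opprD addrC addrA.
Qed.

Lemma fact_neq0 n : (n`!)%:R != 0 :> R.
Proof. by rewrite pnatr_eq0 -lt0n fact_gt0. Qed.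

Lemma natS_neq0 n : 1 + n%:R != 0 :> R.
Proof. by rewrite -mulrS pnatr_eq0. Qed.

Definition prev_col f k j := if j is j'.+1 then f k j' else 0.
Definition prev_row f k j := if k is k'.+1 then f k' j else 0.

Definition hermite_rec (lam c : R) f := forall k j,
  k.+1%:R * f k.+1 j = lam * (2 * c * f k j - prev_col f k j - 2 * prev_row f k j).

Definition hnorm (x : R) k j := (H2 R k j).[x] / ((k`!)%:R * (j`!)%:R).

Lemma hnorm_row0 x n : hnorm x 0 n = x ^+ n / (n`!)%:R.
Proof. by rewrite /hnorm H20 hornerXn fact0 mul1r. Qed.

Lemma hnorm_rec x : hermite_rec 1 x (hnorm x).
Proof.
move=> k j; rewrite mul1r /hnorm horner_H2S.
have col_term : (H2 R k j.-1).[x] *+ j / ((k`!)%:R * (j`!)%:R) = prev_col (hnorm x) k j.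
  case: j => [|j]; first by rewrite mulr0n mul0r.
  rewrite /= /hnorm factS natrM -mulr_natr; field.
  by rewrite natS_neq0 !fact_neq0.
have row_term : (H2 R k.-1 j).[x] *+ (2 * k) / ((k`!)%:R * (j`!)%:R) =
              2 * prev_row (hnorm x) k j.
  case: k {col_term} => [|k]; first by rewrite muln0 mulr0n mul0r mulr0.
  rewrite /= /hnorm factS natrM -mulr_natr natrM; field.
  by rewrite natS_neq0 !fact_neq0.
rewrite -col_term -row_term factS natrM invfM.
by field; rewrite !fact_neq0 natS_neq0.
Qed.

(* Row m+1 is computed from
   rows m and m-1, so the induction carries two consecutive rows. *)
Lemma hermite_rec_unique c f :
  hermite_rec 1 c f -> (forall n, f 0%N n = c ^+ n / (n`!)%:R) ->
  forall m n, f m n = hnorm c m n.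
Proof.
move=> rec_f row0_f.
have rec_h := hnorm_rec c.
suff two_rows : forall m,
    (forall n, f m n = hnorm c m n) /\ (forall n, f m.+1 n = hnorm c m.+1 n).
  by move=> m; case: (two_rows m).
have next_row m : (forall n, prev_row f m n = prev_row (hnorm c) m n) ->
    (forall n, f m n = hnorm c m n) -> forall n, f m.+1 n = hnorm c m.+1 n.
  move=> eq_prev eq_row n; apply: (mulfI (natS_neq0 m)).
  rewrite -[(1 + m%:R)]mulrS rec_f rec_h eq_row eq_prev.
  by case: n => [|n] //=; rewrite eq_row.
have row0 n : f 0%N n = hnorm c 0 n by rewrite row0_f hnorm_row0.
elim=> [|m [eq_m eq_m1]]; first by split=> //; apply: next_row.
by split=> //; apply: next_row.
Qed.
End HermiteArrays.

Section Convolution.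
Variable R : numFieldType.
Implicit Types f g : nat -> nat -> R.

Definition conv f g m n :=
  \sum_(0 <= k < m.+1) \sum_(0 <= j < n.+1) f k j * g (m - k)%N (n - j)%N.

Lemma conv_prev_col f g m n : conv (prev_col f) g m n = prev_col (conv f g) m n.
Proof.
rewrite /conv; case: n => [|n] /=.
  by rewrite big1 // => k _; rewrite big_nat1 mul0r.
apply: eq_bigr => k _; rewrite big_nat_recl //= mul0r add0r.
by apply: eq_bigr => j _; rewrite subSS.
Qed.

Lemma conv_prev_row f g m n : conv (prev_row f) g m n = prev_row (conv f g) m n.
Proof.
rewrite /conv; case: m => [|m] /=.
  by rewrite big_nat1 big1 // => j _; rewrite mul0r.
rewrite big_nat_recl //= big1 ?add0r => [|j _]; last by rewrite mul0r.
by apply: eq_bigr => k _; rewrite subSS.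
Qed.

(* Euler-type identity: by the symmetry k <-> m - k, the weight m of the
   self-convolution splits into twice the weight k of the first factor. *)
Lemma conv_weighted g m n : m%:R * conv g g m n =
  2 * \sum_(0 <= k < m.+1) \sum_(0 <= j < n.+1) k%:R * (g k j * g (m - k)%N (n - j)%N).
Proof.
set W := \sum_(0 <= k < m.+1) _.
have mirror : \sum_(0 <= k < m.+1) \sum_(0 <= j < n.+1)
    (m - k)%:R * (g k j * g (m - k)%N (n - j)%N) = W.
  rewrite big_nat_rev /=; apply: eq_big_nat => k /andP[_ lt_k].
  rewrite big_nat_rev /=; apply: eq_big_nat => j /andP[_ lt_j].
  by rewrite !add0n !subSS !subKn -1?ltnS // mulrCA mulrC mulrA.
rewrite [RHS]mulr_natl mulr2n -{2}mirror /W -big_split /conv mulr_sumr.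
apply: eq_big_nat => k /andP[_ lt_k].
rewrite mulr_sumr -big_split; apply: eq_bigr => j _ /=.
by rewrite -mulrDl -natrD subnKC.
Qed.

Lemma conv_rec c g : hermite_rec 1 c g -> hermite_rec 2 c (conv g g).
Proof.
move=> rec_g m n; rewrite conv_weighted; congr (2 * _).
rewrite big_nat_recl // big1 ?add0r => [|j _]; last by rewrite mul0r.
rewrite -conv_prev_col -conv_prev_row /conv !mulr_sumr -!sumrB.
apply: eq_bigr => k _; rewrite !mulr_sumr -!sumrB; apply: eq_bigr => j _.
by rewrite subSS mulrA rec_g; ring.
Qed.

(* First row of the self-convolution: the binomial theorem for (c + c)^n. *)
Lemma conv_row0 c g : (forall j, g 0%N j = c ^+ j / (j`!)%:R) ->
  forall n, conv g g 0 n = (2 * c) ^+ n / (n`!)%:R.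
Proof.
move=> row0 n; rewrite /conv big_nat1 mulr_natl mulr2n exprDn big_mkord mulr_suml.
apply: eq_bigr => [[j lt_jn]] _ /=.
have le_jn : (j <= n)%N by [].
have binom_neq0 : ('C(n, j))%:R != 0 :> R by rewrite pnatr_eq0 -lt0n bin_gt0.
rewrite !row0 -(bin_fact le_jn) !natrM -mulr_natr.
by field; rewrite binom_neq0 !fact_neq0.
Qed.

Definition scale (s : R) f k j := s ^+ (k + j) * f k j.

Lemma scale_rec lam s c f : lam * s ^+ 2 = 1 ->
  hermite_rec lam c f -> hermite_rec 1 (lam * s * c) (scale s f).
Proof.
move=> lam_s rec_f k j.
have s_neq0 : s != 0.
  by apply/eqP=> s0; move: lam_s; rewrite s0 expr0n mulr0 => /esym/eqP; rewrite oner_eq0.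
have s2_neq0 : s ^+ 2 != 0 by rewrite expf_neq0.
have lam_inv : lam = (s ^+ 2)^-1 by apply: (mulIf s2_neq0); rewrite lam_s mulVf.
rewrite mul1r /scale addSn exprS mulrCA rec_f lam_inv.
by case: j => [|j]; case: k => [|k] /=;
   rewrite /scale ?addnS ?addSn ?addn0 ?add0n ?exprS; field.
Qed.
End Convolution.

Section Duplication.
Variable R : rcfType.

Lemma sqrt2_neq0 : Num.sqrt (2 : R) != 0.
Proof. by rewrite sqrtr_eq0 -ltNge ltr0n. Qed.

Lemma sqr_sqrt2 : Num.sqrt (2 : R) ^+ 2 = 2.
Proof. by rewrite sqr_sqrtr // ler0n. Qed.

(* The theorem in normalized form: h_t = scaled self-convolution of
   h_{t/sqrt 2}, since both solve the recurrence at t with first row t^j/j!. *)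
Lemma hnorm_duplication (t : R) m n :
  hnorm t m n = scale (1 / Num.sqrt 2)
    (conv (hnorm (t / Num.sqrt 2)) (hnorm (t / Num.sqrt 2))) m n.
Proof.
have := sqrt2_neq0; have := sqr_sqrt2.
set r := Num.sqrt (2 : R) => r2 r_neq0.
have two_s2 : 2 * (1 / r) ^+ 2 = 1 by rewrite -{1}r2; field.
have two_s_x : 2 * (1 / r) * (t / r) = t by rewrite -{1}r2; field.
symmetry; apply: hermite_rec_unique => [|k].
  by rewrite -[in hermite_rec _ t]two_s_x; apply: scale_rec => //; apply/conv_rec/hnorm_rec.
by rewrite /scale add0n (conv_row0 (hnorm_row0 (t / r))) mulrA -exprMn mulrCA mulrA two_s_x.
Qed.
End Duplication.

Theorem mainTheorem10 (R : rcfType) (m n : nat) (t : R) :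
  (H2 R m n).[t] =
  (m`!)%:R * (n`!)%:R * (1 / Num.sqrt 2) ^+ (m + n) *
  \sum_(0 <= k < m.+1) \sum_(0 <= j < n.+1)
     ((H2 R k j).[t / Num.sqrt 2] / ((k`!)%:R * (j`!)%:R)) *
     ((H2 R (m - k) (n - j)).[t / Num.sqrt 2] /
        (((m - k)`!)%:R * ((n - j)`!)%:R)).
Proof.
have := hnorm_duplication t m n; rewrite /hnorm /scale /conv -mulrA => <-.
by field; rewrite !fact_neq0.
Qed.
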